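(* Let $T$ be a commutative ring with identity, $S$ a unital subring and $I$ a nil ideal of $T$ with $T=S+I$ and $S\cap I=\{0\}$. Then: (1) $T$ is almost complemented if and only if $S$ is almost complemented; (2) $T$ is $\pi$-complemented if and only if $S$ is $\pi$-complemented and $I$ is a torsion-free $S$-module; (3) $T$ has Property $D^\flat$ if and only if $S$ has Property $D^\flat$.
   Context: For a ring $A$, $\mathfrak{N}(A)$ is the nilradical, $\mathrm{reg}(A)$ the regular elements, $\mathrm{areg}(A)=\{x: x+\mathfrak{N}(A)\in\mathrm{reg}(A/\mathfrak{N}(A))\}$. An element $a$ is complemented if there is $b$ with $ab=0$, $a+b\in\mathrm{reg}(A)$; $A$ is complemented if all elements are; $A$ is almost complemented if $A/\mathfrak{N}(A)$ is complemented; $A$ is $\pi$-complemented if every element has a complemented power. $A$ has Property $D^\flat$ if $A\setminus\mathfrak{N}(A)=\mathrm{areg}(A)$. An $S$-module $M$ is torsion-free if $rm=0$ with $r\in\mathrm{reg}(S)$ implies $m=0$. *)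

From HB Require Import structures.
From mathcomp Require Import all_boot all_order all_algebra.
Set Implicit Arguments. Unset Strict Implicit. Unset Printing Implicit Defensive.
Import GRing.Theory.
Local Open Scope ring_scope.

Section RingNotions.
Variable A : comPzRingType.

Definition in_nilrad (x : A) : Prop := exists n : nat, x ^+ n = 0.

Definition regular (x : A) : Prop := forall y : A, x * y = 0 -> y = 0.

(* areg(A): x + N(A) is regular in A / N(A), written on representatives:
   (x + N)(y + N) = 0 in A/N  <->  x*y in N,  and  y + N = 0 <-> y in N *)
Definition areg (x : A) : Prop := forall y : A, in_nilrad (x * y) -> in_nilrad y.

Definition complemented_elt (a : A) : Prop :=
  exists b : A, a * b = 0 /\ regular (a + b).

Definition complemented_ring : Prop := forall a : A, complemented_elt a.

(* A/N(A) is complemented, written on representatives: for every class a + N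
   there is b + N with (a+N)(b+N) = 0 and (a+N)+(b+N) regular in A/N. *)
Definition almost_complemented : Prop :=
  forall a : A, exists b : A, in_nilrad (a * b) /\ areg (a + b).

Definition pi_complemented : Prop :=
  forall a : A, exists n : nat, complemented_elt (a ^+ n.+1).

Definition property_Dflat : Prop := forall x : A, ~ in_nilrad x <-> areg x.

End RingNotions.

(* I (a subset of T) is an S-module via the embedding f : S -> T, s.m := f s * m;
   torsion-free: r regular in S, m in I, r.m = 0 implies m = 0 *)
Definition torsion_free (S T : comPzRingType) (f : S -> T) (I : {pred T}) : Prop :=
  forall (r : S) (m : T), regular r -> m \in I -> f r * m = 0 -> m = 0.

(* Since T = f(S) + I with f(S) ∩ I = 0, every t in T is congruent modulo I
   to a unique f s, and the relevant notions are insensitive to this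
   congruence: I is nil, so congruent elements are simultaneously nilpotent or
   almost regular, and a non-zero-divisor plus a nilpotent is again a
   non-zero-divisor.  This gives (1) and (3), and shows that a complement in T
   of a power of f s reduces to a complement in S of the same power of s.
   Torsion-freeness of I is exactly what makes f r regular in T for r regular
   in S; conversely, when T is π-complemented the complement of a power of f r
   lies in I, so that power of f r is itself regular.  Finally, if c
   complements s^(n+1) and i^N = 0, then c^(N+1) complements s^((n+1)(N+1)),
   and since (n+1)(N+1) >= n+1+N the binomial expansion shows that
   f(c^(N+1)) complements (f s + i)^((n+1)(N+1)). *)

From mathcomp Require Import all_boot all_order all_algebra ring zify.
Set Implicit Arguments. Unset Strict Implicit. Unset Printing Implicit Defensive.
Import GRing.Theory.
Local Open Scope ring_scope.

Section RegularNilpotent.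
Variable A : comPzRingType.
Implicit Types x y c j : A.

Lemma regularM x y : regular x -> regular y -> regular (x * y).
Proof. by move=> rx ry z h; apply: ry; apply: rx; rewrite mulrA. Qed.

Lemma regularX x n : regular x -> regular (x ^+ n).
Proof.
move=> rx; elim: n => [|n IHn]; first by move=> z; rewrite expr0 mul1r.
by rewrite exprS; apply: regularM.
Qed.

Lemma in_nilradX x n : in_nilrad (x ^+ n) -> in_nilrad x.
Proof. by move=> [m xnm]; exists (n * m)%N; rewrite exprM. Qed.

Lemma regularD_nilrad x j : regular x -> in_nilrad j -> regular (x + j).
Proof.
move=> rx [N jN] m; have : j ^+ N * m = 0 by rewrite jN mul0r.
clear jN; elim: N m => [|N IHN] m; first by rewrite mul1r.
move=> jNm xjm; have jm0 : j * m = 0.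
  by apply: IHN; [rewrite mulrA -exprSr | rewrite mulrCA xjm mulr0].
by apply: rx; move: xjm; rewrite mulrDl jm0 addr0.
Qed.

Lemma exprD_mul0 x y n : x * y = 0 -> (x + y) ^+ n.+1 = x ^+ n.+1 + y ^+ n.+1.
Proof.
move=> xy0; elim: n => [|n IHn]; first by rewrite !expr1.
rewrite exprS IHn mulrDl !mulrDr -!exprS.
have -> : x * y ^+ n.+1 = 0 by rewrite exprS mulrA xy0 mul0r.
have -> : y * x ^+ n.+1 = 0 by rewrite exprS mulrA (mulrC y) xy0 mul0r.
by rewrite addr0 add0r.
Qed.

Lemma exprD_nilrad_mul0 x y c k N m :
  x ^+ k * c = 0 -> y ^+ N = 0 -> (k + N <= m)%N -> (x + y) ^+ m * c = 0.
Proof.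
move=> xkc yN km; rewrite exprDn mulr_suml big1 // => i _.
rewrite mulrnAl mulrAC; case: (ltnP i N) => [iN | Ni].
- have km_i : (k <= m - i)%N by lia.
  by rewrite -(subnKC km_i) exprD (mulrAC (x ^+ k)) xkc !mul0r mul0rn.
- by rewrite -(subnKC Ni) exprD yN mul0r mulr0 mul0rn.
Qed.

Definition complement x c := x * c = 0 /\ regular (x + c).

Lemma complementX x c n :
  complement x c -> complement (x ^+ n.+1) (c ^+ n.+1).
Proof.
move=> [xc0 rxc]; split; first by rewrite -exprMn xc0 expr0n.
by rewrite -exprD_mul0 //; apply: regularX.
Qed.

End RegularNilpotent.

Section NilIdealSplitting.
Variables (S T : comPzRingType) (f : {rmorphism S -> T}) (I : {pred T}).
Hypotheses (f_inj : injective f) (I0 : 0 \in I)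
  (IB : forall x y, x \in I -> y \in I -> x - y \in I)
  (IM : forall t x, x \in I -> t * x \in I)
  (Inil : forall x, x \in I -> in_nilrad x)
  (TSI : forall t : T, exists (s : S) (i : T), i \in I /\ t = f s + i)
  (SI0 : forall s : S, f s \in I -> f s = 0).

Lemma memIN x : x \in I -> - x \in I.
Proof. by move=> xI; rewrite -sub0r IB. Qed.

Definition eqmod (x y : T) : Prop := x - y \in I.

Lemma eqmod_refl x : eqmod x x.
Proof. by rewrite /eqmod subrr. Qed.

Lemma eqmod_sym x y : eqmod x y -> eqmod y x.
Proof. by move=> xy; rewrite /eqmod -opprB memIN. Qed.

Lemma eqmodD x x' y y' : eqmod x x' -> eqmod y y' -> eqmod (x + y) (x' + y').
Proof.
move=> xx' yy'; rewrite /eqmod opprD addrACA -[y - y']opprK.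
by rewrite IB ?memIN.
Qed.

Lemma eqmodM x x' y y' : eqmod x x' -> eqmod y y' -> eqmod (x * y) (x' * y').
Proof.
move=> xx' yy'; rewrite /eqmod.
have -> : x * y - x' * y' = x * (y - y') - y' * (x' - x) by ring.
by rewrite IB ?IM // -opprB memIN.
Qed.

Lemma eqmodX x y n : eqmod x y -> eqmod (x ^+ n) (y ^+ n).
Proof.
move=> xy; elim: n => [|n IHn]; first exact: eqmod_refl.
by rewrite !exprS; apply: eqmodM.
Qed.

Lemma eqmod_rmorphD x y s c :
  eqmod x (f s) -> eqmod y (f c) -> eqmod (x + y) (f (s + c)).
Proof. by rewrite rmorphD; apply: eqmodD. Qed.

Lemma eqmod_rmorphM x y s c :
  eqmod x (f s) -> eqmod y (f c) -> eqmod (x * y) (f (s * c)).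
Proof. by rewrite rmorphM; apply: eqmodM. Qed.

Lemma eqmod_rmorphX x s n : eqmod x (f s) -> eqmod (x ^+ n) (f (s ^+ n)).
Proof. by rewrite rmorphXn; apply: eqmodX. Qed.

Lemma eqmod_lift t : exists s, eqmod t (f s).
Proof.
by have [s [i [iI ->]]] := TSI t; exists s; rewrite /eqmod addrAC subrr add0r.
Qed.

Lemma eqmod0_eq0 s : eqmod 0 (f s) -> s = 0.
Proof.
rewrite /eqmod sub0r => /memIN; rewrite opprK => /SI0 fs0.
by apply: f_inj; rewrite fs0 rmorph0.
Qed.

Lemma nilrad_eqmod t s : eqmod t (f s) -> in_nilrad t <-> in_nilrad s.
Proof.
move=> ts; split=> [[n tn0] | [n sn0]].
  by exists n; apply: eqmod0_eq0; rewrite -tn0; apply: eqmod_rmorphX.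
apply: (@in_nilradX _ _ n); apply: Inil.
by have := eqmod_rmorphX n ts; rewrite sn0 rmorph0 /eqmod subr0.
Qed.

Lemma areg_eqmod t s : eqmod t (f s) -> areg t <-> areg s.
Proof.
move=> ts; split=> [aregt u su | aregs y ty].
  apply/(nilrad_eqmod (eqmod_refl (f u)))/aregt.
  by apply/(nilrad_eqmod (eqmod_rmorphM ts (eqmod_refl _))).
have [u yu] := eqmod_lift y.
apply/(nilrad_eqmod yu)/aregs.
by apply/(nilrad_eqmod (eqmod_rmorphM ts yu)).
Qed.

Lemma regular_eqmod x y : eqmod x y -> regular y -> regular x.
Proof. by move=> xy ry; rewrite -(subrKC y x); apply: regularD_nilrad (Inil xy). Qed.

Lemma regular_rmorph s : regular (f s) -> regular s.
Proof.
move=> rfs u su0; apply: f_inj; rewrite rmorph0; apply: rfs.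
by rewrite -rmorphM su0 rmorph0.
Qed.

Lemma complement_eqmod x y s c :
  complement x y -> eqmod x (f s) -> eqmod y (f c) -> complement s c.
Proof.
move=> [xy0 rxy] xs yc; split.
  by apply: eqmod0_eq0; rewrite -xy0; apply: eqmod_rmorphM.
apply/regular_rmorph/(regular_eqmod _ rxy).
by apply/eqmod_sym/eqmod_rmorphD.
Qed.

Lemma regular_rmorph_torsion_free r :
  torsion_free f I -> regular r -> regular (f r).
Proof.
move=> tf rr y ry0; have [u yu] := eqmod_lift y.
have u0 : u = 0.
  by apply/rr/eqmod0_eq0; rewrite -ry0; apply: eqmod_rmorphM (eqmod_refl _) yu.
by apply: (tf r) => //; move: yu; rewrite u0 rmorph0 /eqmod subr0.
Qed.

Lemma almost_complemented_iff : almost_complemented T <-> almost_complemented S.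
Proof.
split=> [acT s | acS a].
  have [b [nil_sb areg_sb]] := acT (f s); have [c bc] := eqmod_lift b.
  exists c; split.
    by apply/(nilrad_eqmod (eqmod_rmorphM (eqmod_refl _) bc)).
  by apply/(areg_eqmod (eqmod_rmorphD (eqmod_refl _) bc)).
have [s a_s] := eqmod_lift a; have [c [nil_sc areg_sc]] := acS s.
exists (f c); split.
  by apply/(nilrad_eqmod (eqmod_rmorphM a_s (eqmod_refl _))).
by apply/(areg_eqmod (eqmod_rmorphD a_s (eqmod_refl _))).
Qed.

Lemma property_Dflat_iff : property_Dflat T <-> property_Dflat S.
Proof.
split=> [DT s | DS t].
  by rewrite -(nilrad_eqmod (eqmod_refl (f s))) -(areg_eqmod (eqmod_refl (f s))).
by have [s ts] := eqmod_lift t; rewrite (nilrad_eqmod ts) (areg_eqmod ts).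
Qed.

Lemma pi_complemented_descends : pi_complemented T -> pi_complemented S.
Proof.
move=> piT s; have [n [b sb]] := piT (f s); have [c bc] := eqmod_lift b.
by exists n, c; apply: complement_eqmod sb (eqmod_rmorphX _ (eqmod_refl _)) bc.
Qed.

Lemma pi_complemented_torsion_free : pi_complemented T -> torsion_free f I.
Proof.
move=> piT r m rr mI rm0; have [n [b [rb0 rrb]]] := piT (f r).
have [c bc] := eqmod_lift b.
have c0 : c = 0.
  have frn := eqmod_rmorphX n.+1 (eqmod_refl (f r)).
  have [rc0 _] := complement_eqmod (conj rb0 rrb) frn bc.
  exact: (regularX (n := n.+1) rr).
have bI : b \in I by move: bc; rewrite c0 rmorph0 /eqmod subr0.
have rfrn : regular (f r ^+ n.+1).
  by apply: regular_eqmod rrb; rewrite /eqmod opprD addNKr memIN.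
by apply: rfrn; rewrite exprSr -mulrA rm0 mulr0.
Qed.

Lemma pi_complemented_lift :
  torsion_free f I -> pi_complemented S -> pi_complemented T.
Proof.
move=> tf piS a; have [s a_s] := eqmod_lift a; have [N iN] := Inil a_s.
have [n [c sc]] := piS s; have [scN0 rscN] := complementX N sc.
exists (N + n * N.+1)%N, (f (c ^+ N.+1)); split.
  rewrite -(subrKC (f s) a); apply: (exprD_nilrad_mul0 (k := n.+1) _ iN); last by nia.
  by rewrite -rmorphXn -rmorphM (exprS c) mulrA sc.1 mul0r rmorph0.
apply: regular_eqmod (regular_rmorph_torsion_free tf rscN).
rewrite -exprM mulSn -addSn.
exact: eqmod_rmorphD (eqmod_rmorphX _ a_s) (eqmod_refl _).
Qed.

Lemma pi_complemented_iff :
  pi_complemented T <-> pi_complemented S /\ torsion_free f I.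
Proof.
split=> [piT | [piS tf]]; last exact: pi_complemented_lift.
by split; [apply: pi_complemented_descends | apply: pi_complemented_torsion_free].
Qed.

End NilIdealSplitting.

Theorem mainTheorem11 (S T : comPzRingType) (f : {rmorphism S -> T})
  (I : {pred T})
  (f_inj : injective f)
  (I0 : 0 \in I)
  (IB : forall x y, x \in I -> y \in I -> x - y \in I)
  (IM : forall t x, x \in I -> t * x \in I)
  (Inil : forall x, x \in I -> in_nilrad x)
  (TSI : forall t : T, exists (s : S) (i : T), i \in I /\ t = f s + i)
  (SI0 : forall s : S, f s \in I -> f s = 0) :
  (almost_complemented T <-> almost_complemented S) /\
  (pi_complemented T <-> pi_complemented S /\ torsion_free f I) /\
  (property_Dflat T <-> property_Dflat S).
Proof.
split; first exact: (almost_complemented_iff f_inj I0 IB IM Inil TSI SI0).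
split; first exact: (pi_complemented_iff f_inj I0 IB IM Inil TSI SI0).
exact: (property_Dflat_iff f_inj I0 IB IM Inil TSI SI0).
Qed.
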